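(* Let $(\mathbb{Z}_{(p_n)},+\mathbf{1})$ and $(\mathbb{Z}_{(q_n)},+\mathbf{1})$ be odometers with scales $(p_n)$ and $(q_n)$ respectively, both with finite torsion, and let $s$ be a prime. If $\mathbf{v}_s((q_n))=\infty$ and $\operatorname{Aut}^{(\infty)}(\mathbb{Z}_{(p_n)},+\mathbf{1})\cong\operatorname{Aut}^{(\infty)}(\mathbb{Z}_{(q_n)},+\mathbf{1})$ as groups, then $\mathbf{v}_s((p_n))=\infty$.
   Context: A scale is a sequence $(p_n)$ of positive integers with $p_n\mid p_{n+1}$, not eventually constant; the odometer is $\mathbb{Z}_{(p_n)}=\{(x_n)\in\prod_n\mathbb{Z}/p_n\mathbb{Z}: x_{n+1}\equiv x_n\bmod p_n\}$ with translation by $\mathbf{1}=(1,1,\dots)$. For a prime $p$, $\mathbf{v}_p((p_n))=\lim_n\nu_p(p_n)\in\mathbb{N}\cup\{0,\infty\}$, $\nu_p$ the $p$-adic valuation. The odometer has finite torsion if $\mathbf{v}_p((p_n))\in\{0,\infty\}$ for all but finitely many primes $p$. $\operatorname{Aut}(X,T)$ is the group of homeomorphisms commuting with $T$ and $\operatorname{Aut}^{(\infty)}(X,T)=\bigcup_{n\ge1}\operatorname{Aut}(X,T^n)\subseteq\operatorname{Homeo}(X)$. *)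

From mathcomp Require Import all_boot.
Set Implicit Arguments. Unset Strict Implicit. Unset Printing Implicit Defensive.

Record scale := Scale {
  sc :> nat -> nat;
  sc_pos : forall n, 0 < sc n;
  sc_dvd : forall n, sc n %| sc n.+1;
  sc_nconst : ~ (exists N, forall n, N <= n -> sc n = sc N)
}.

Definition odo_pred (p : scale) (x : nat -> nat) : Prop :=
  forall n, x n < p n /\ x n.+1 %% p n = x n.

Definition odometer (p : scale) : Type := {x : nat -> nat | odo_pred p x}.

Lemma odoT_proof (p : scale) (x : odometer p) :
  odo_pred p (fun n => (proj1_sig x n + 1) %% p n).
Proof.
case: x => x Hx n /=; split; first by rewrite ltn_pmod // sc_pos.
rewrite (modn_dvdm _ (sc_dvd p n)) -modnDml.
by case: (Hx n) => _ ->.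
Qed.

Definition odoT (p : scale) (x : odometer p) : odometer p :=
  exist _ (fun n => (proj1_sig x n + 1) %% p n) (odoT_proof x).

(* Continuity for the product topology (discrete factors) restricted to the
   odometer: basic neighbourhoods of x are the cylinders {y | y_m = x_m}. *)
Definition odo_continuous (p q : scale) (f : odometer p -> odometer q) : Prop :=
  forall (x : odometer p) (n : nat), exists m : nat, forall y : odometer p,
    proj1_sig y m = proj1_sig x m -> proj1_sig (f y) n = proj1_sig (f x) n.

Definition is_homeo (p : scale) (f : odometer p -> odometer p) : Prop :=
  exists g : odometer p -> odometer p,
    cancel f g /\ cancel g f /\ odo_continuous f /\ odo_continuous g.

(* Aut^(infty)(X,T) = union over n >= 1 of Aut(X, T^n), inside Homeo(X). *)
Definition aut_inf (p : scale) (f : odometer p -> odometer p) : Prop :=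
  is_homeo f /\ exists k, 0 < k /\
    forall x, f (iter k (@odoT p) x) = iter k (@odoT p) (f x).

Definition aut_inf_iso (p q : scale) : Prop :=
  exists Phi : (odometer p -> odometer p) -> (odometer q -> odometer q),
    (forall f, aut_inf f -> aut_inf (Phi f)) /\
    (forall f g, aut_inf f -> aut_inf g -> Phi f = Phi g -> f = g) /\
    (forall h, aut_inf h -> exists2 f, aut_inf f & Phi f = h) /\
    (forall f g, aut_inf f -> aut_inf g -> Phi (f \o g) = Phi f \o Phi g).

(* v_s((p_n)) = lim_n nu_s(p_n). *)
Definition v_infty (p : scale) (s : nat) : Prop :=
  forall k, exists N, forall n, N <= n -> k <= logn s (p n).
Definition v_zero (p : scale) (s : nat) : Prop :=
  exists N, forall n, N <= n -> logn s (p n) = 0.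

Definition finite_torsion (p : scale) : Prop :=
  exists N, forall r, prime r -> N <= r -> v_zero p r \/ v_infty p r.

(** The property "Aut^(oo) has an element of infinite order with an [n]-th root for
    every [n] prime to [s]" is group-theoretic, so it is carried by the isomorphism.
    If [v_s = oo], the translation by the point that is [1] on the [Z_s] factor and [0]
    on the others has it, since every [n] prime to [s] is invertible in [Z_s].
    Conversely, an element of Aut^(oo) acts as [x + phi (x mod p_M)] for some level [M];
    a power [g] of it fixes the classes modulo [p_M], acts on each of them as a
    translation, and, under finite torsion, a further power makes every shift of [g]
    divisible by the bounded part of the scale carried by the primes of finite
    valuation.  So if [g] is not the identity, some shift of [g] is not divisible by
    [r^(v_r(p_L))] for a prime [r <> s] with [v_r = oo].  But if [h^(r^k) = g], adding
    up the shifts of [g^Q = h^(Q r^k)] over a suitable [h]-stable set of classes shows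
    that the shifts of [g] are divisible by [r^(k - p_M)]: a contradiction for [k]
    large. *)

From mathcomp Require Import all_boot all_algebra zify ring.
From Stdlib Require Import ClassicalEpsilon FunctionalExtensionality ProofIrrelevance Classical.
Import GRing.Theory.

Set Implicit Arguments. Unset Strict Implicit. Unset Printing Implicit Defensive.

Definition classicb (P : Prop) : bool := if excluded_middle_informative P then true else false.

Lemma classicbP (P : Prop) : reflect P (classicb P).
Proof. by rewrite /classicb; case: excluded_middle_informative; constructor. Qed.

Lemma bounded_homo_stable (u : nat -> nat) B :
  (forall n, u n <= B) -> {homo u : m n / m <= n} ->
  exists M, forall n, M <= n -> u n = u M.
Proof.
move=> uB u_homo.
have exP : exists v, classicb (exists n, u n = v) by exists (u 0); apply/classicbP; exists 0.
have boundP : forall v, classicb (exists n, u n = v) -> v <= B.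
  by move=> v /classicbP [n <-].
case: (ex_maxnP exP boundP) => _ /classicbP [M <-] u_max.
exists M => n leMn; apply/anti_leq/andP; split; last exact: u_homo.
by apply: u_max; apply/classicbP; exists n.
Qed.

Lemma iter_inj (T : Type) (f : T -> T) j : injective f -> injective (iter j f).
Proof. by move=> f_inj; elim: j => [|j IH] //= x y /f_inj /IH. Qed.

Lemma iter_fact_card (T : finType) (f : T -> T) x : injective f -> iter #|T|`! f x = x.
Proof.
move=> f_inj.
have order_le : order f x <= #|T|.
  by rewrite -size_orbit -(card_uniqP (orbit_uniq f x)) max_card.
have /dvdnP [t ->] : order f x %| #|T|`! by rewrite dvdn_fact // order_gt0 order_le.
by rewrite iterM; elim: t => [|t IH] //=; rewrite IH iter_order.
Qed.

(** Congruences of integers, in existential form so that, once unpacked, the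
    goals are linear and [lia] closes them. *)
Definition eqmz (d : nat) (a b : int) : Prop := exists k : int, (a - b = k * d%:Z)%R.

Section Congruence.
Variable d : nat.
Implicit Types a b c e : int.

Lemma eqmz_refl a : eqmz d a a.
Proof. by exists 0%R; rewrite subrr mul0r. Qed.

Lemma eqmz_eq a b : a = b -> eqmz d a b.
Proof. by move=> ->; apply: eqmz_refl. Qed.

Lemma eqmz_sym a b : eqmz d a b -> eqmz d b a.
Proof. by case=> k E; exists (- k)%R; lia. Qed.

Lemma eqmz_trans a b c : eqmz d a b -> eqmz d b c -> eqmz d a c.
Proof. by case=> k E [l E']; exists (k + l)%R; lia. Qed.

Lemma eqmzD a b c e : eqmz d a b -> eqmz d c e -> eqmz d (a + c) (b + e).
Proof. by case=> k E [l E']; exists (k + l)%R; lia. Qed.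

Lemma eqmzB a b c e : eqmz d a b -> eqmz d c e -> eqmz d (a - c) (b - e).
Proof. by case=> k E [l E']; exists (k - l)%R; lia. Qed.

Lemma eqmzMl c a b : eqmz d a b -> eqmz d (c * a) (c * b).
Proof. by case=> k E; exists (c * k)%R; rewrite -mulrBr E mulrA. Qed.

Lemma eqmz_sum (I : Type) (r : seq I) (P : pred I) (F G : I -> int) :
  (forall i, P i -> eqmz d (F i) (G i)) ->
  eqmz d (\sum_(i <- r | P i) F i) (\sum_(i <- r | P i) G i).
Proof.
move=> FG; elim: r => [|i r IH]; first by rewrite !big_nil; apply: eqmz_refl.
by rewrite !big_cons; case: (boolP (P i)) => // Pi; apply: eqmzD => //; apply: FG.
Qed.

Lemma eqmz_dvdP a b : eqmz d a b <-> (d%:Z %| (a - b)%R)%Z.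
Proof. by split; [case=> k E; apply/dvdzP; exists k | move/dvdzP]. Qed.

Lemma eqmz_nat (m n : nat) : eqmz d m%:Z n%:Z <-> m = n %[mod d].
Proof.
rewrite eqmz_dvdP -eqz_mod_dvd !modz_nat.
by split; [move/eqP => [] | move=> ->].
Qed.

Lemma eqmz_small (m n : nat) : m < d -> n < d -> eqmz d m%:Z n%:Z -> m = n.
Proof. by move=> ltmd ltnd /eqmz_nat; rewrite !modn_small. Qed.

Lemma eqmz0_dvd (x : int) : eqmz d x 0%R <-> d %| `|x|%N.
Proof. by rewrite eqmz_dvdP subr0. Qed.

Lemma eqmz_modn (m : nat) : eqmz d (m %% d)%N%:Z m%:Z.
Proof. by apply/eqmz_nat; rewrite modn_mod. Qed.

End Congruence.

Lemma eqmz_dvd d d' a b : d' %| d -> eqmz d a b -> eqmz d' a b.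
Proof. by case/dvdnP=> m -> [k E]; exists (k * m%:Z)%R; rewrite E PoszM mulrA. Qed.

Lemma eqmz_crt (m1 m2 : nat) a b :
  coprime m1 m2 -> eqmz m1 a b -> eqmz m2 a b -> eqmz (m1 * m2) a b.
Proof.
move=> co /eqmz_dvdP dvd1 /eqmz_dvdP dvd2; apply/eqmz_dvdP.
by rewrite PoszM Gauss_dvdz ?dvd1 ?dvd2 //; apply/eqP.
Qed.

Lemma eqmz_zchinese (m1 m2 : nat) r1 r2 : coprime m1 m2 ->
  eqmz m1 (zchinese m1%:Z m2%:Z r1 r2) r1 /\ eqmz m2 (zchinese m1%:Z m2%:Z r1 r2) r2.
Proof.
have co_z : coprime m1 m2 -> coprimez m1%:Z m2%:Z by [].
move=> /co_z co; split; apply/eqmz_dvdP; rewrite -eqz_mod_dvd; apply/eqP.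
  exact: zchinese_modl.
exact: zchinese_modr.
Qed.

Definition resid (p : scale) (x : odometer p) (n : nat) : nat := sval x n.

Section OdometerBasics.
Variable p : scale.
Implicit Types x y : odometer p.

Lemma scale_dvd n m : n <= m -> p n %| p m.
Proof.
elim: m => [|m IH]; first by rewrite leqn0 => /eqP ->.
rewrite leq_eqVlt => /orP [/eqP -> //|]; rewrite ltnS => /IH le_nm.
exact: dvdn_trans le_nm (sc_dvd p m).
Qed.

Lemma resid_lt x n : resid x n < p n.
Proof. by case: x => x xP; case: (xP n). Qed.

Lemma resid_mod x n m : n <= m -> resid x m %% p n = resid x n.
Proof.
elim: m => [|m IH]; first by rewrite leqn0 => /eqP ->; rewrite modn_small // resid_lt.
rewrite leq_eqVlt => /orP [/eqP <-|]; first by rewrite modn_small // resid_lt.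
rewrite ltnS => le_nm; rewrite -(IH le_nm) -(modn_dvdm _ (scale_dvd le_nm)).
by case: x {IH} => x xP /=; case: (xP m) => _ ->.
Qed.

Lemma resid_eqmz x n m : n <= m -> eqmz (p n) (resid x m)%:Z (resid x n)%:Z.
Proof. by move=> le_nm; apply/eqmz_nat; rewrite -(resid_mod x le_nm) modn_mod. Qed.

Lemma odo_ext x y : (forall n, resid x n = resid y n) -> x = y.
Proof.
case: x => x xP; case: y => y yP /= xy.
have E : x = y by apply: functional_extensionality.
by subst y; rewrite (proof_irrelevance _ xP yP).
Qed.

Lemma odo_eqmz x y : (forall n, eqmz (p n) (resid x n)%:Z (resid y n)%:Z) -> x = y.
Proof. by move=> xy; apply: odo_ext => n; apply: eqmz_small (xy n); apply: resid_lt. Qed.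

Lemma resid_iterT x j n : resid (iter j (@odoT p) x) n = (resid x n + j) %% p n.
Proof.
elim: j => [|j IH] /=; first by rewrite addn0 modn_small // resid_lt.
by rewrite /resid /= -/(resid _ n) IH modnDml addn1 addnS.
Qed.

Lemma resid_iterT_eqmz x j n :
  eqmz (p n) (resid (iter j (@odoT p) x) n)%:Z ((resid x n)%:Z + j%:Z)%R.
Proof. by rewrite resid_iterT -PoszD; apply: eqmz_modn. Qed.

Lemma odo_zero_proof : odo_pred p (fun _ => 0).
Proof. by move=> n; split; [exact: sc_pos | exact: mod0n]. Qed.

Definition odo_zero : odometer p := exist _ (fun _ => 0) odo_zero_proof.

Definition odo_nat (a : nat) : odometer p := iter a (@odoT p) odo_zero.

Lemma resid_odo_nat a n : resid (odo_nat a) n = a %% p n.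
Proof. by rewrite /odo_nat resid_iterT. Qed.

Lemma resid_odo_nat_eqmz a n : eqmz (p n) (resid (odo_nat a) n)%:Z a%:Z.
Proof. by rewrite resid_odo_nat; apply: eqmz_modn. Qed.

Lemma resid_odo_nat_small x M : resid (odo_nat (resid x M)) M = resid x M.
Proof. by rewrite resid_odo_nat modn_small // resid_lt. Qed.

End OdometerBasics.

Lemma odo_continuous_comp (p : scale) (f g : odometer p -> odometer p) :
  odo_continuous f -> odo_continuous g -> odo_continuous (f \o g).
Proof.
move=> fC gC x n; case: (fC (g x) n) => m1 fm1; case: (gC x m1) => m2 gm2.
by exists m2 => y /gm2 /fm1.
Qed.

Lemma odo_continuous_id (p : scale) : odo_continuous (@id (odometer p)).
Proof. by move=> x n; exists n. Qed.

Lemma comm_iterM (T : Type) (f t : T -> T) k :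
  (forall x, f (iter k t x) = iter k t (f x)) ->
  forall j x, f (iter (j * k) t x) = iter (j * k) t (f x).
Proof. by move=> fk; elim=> [|j IH] x //=; rewrite mulSn !iterD fk IH. Qed.

Section AutInf.
Variable p : scale.
Implicit Types f g : odometer p -> odometer p.

Lemma aut_inf_id : aut_inf (@id (odometer p)).
Proof.
split; last by exists 1.
by exists id; do !split; apply: odo_continuous_id.
Qed.

Lemma aut_inf_comp f g : aut_inf f -> aut_inf g -> aut_inf (f \o g).
Proof.
move=> [[f' [ff' [f'f [fC f'C]]]] [k [k_gt0 fk]]].
move=> [[g' [gg' [g'g [gC g'C]]]] [l [l_gt0 gl]]].
split.
  exists (g' \o f'); split; first by move=> x /=; rewrite ff' gg'.
  split; first by move=> x /=; rewrite g'g f'f.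
  by split; apply: odo_continuous_comp.
exists (k * l); split; first by rewrite muln_gt0 k_gt0.
by move=> x /=; rewrite (comm_iterM gl) mulnC (comm_iterM fk).
Qed.

Lemma aut_inf_iter f k : aut_inf f -> aut_inf (iter k f).
Proof.
move=> fA; elim: k => [|k IH]; first exact: aut_inf_id.
exact: aut_inf_comp fA IH.
Qed.

Lemma aut_inf_inv f : aut_inf f -> exists2 f', aut_inf f' & cancel f f' /\ cancel f' f.
Proof.
move=> [[f' [ff' [f'f [fC f'C]]]] [k [k_gt0 fk]]].
exists f'; last by [].
split; first by exists f.
by exists k; split => // x; rewrite -{1}(f'f x) -fk ff'.
Qed.

Lemma aut_inf_inj f : aut_inf f -> injective f.
Proof. by move=> [[f' [ff' _]] _]; apply: can_inj ff'. Qed.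

End AutInf.

Definition has_s'divisible_elt (p : scale) (s : nat) : Prop :=
  exists g : odometer p -> odometer p,
    [/\ aut_inf g, forall k, 0 < k -> iter k g <> id &
        forall n, 0 < n -> coprime n s -> exists2 h, aut_inf h & iter n h = g].

Lemma has_s'divisible_elt_iso (p q : scale) (s : nat) :
  aut_inf_iso p q -> has_s'divisible_elt q s -> has_s'divisible_elt p s.
Proof.
move=> [Phi [PhiA [Phi_inj [Phi_surj PhiM]]]] [g [gA g_ord g_root]].
have Phi_id : Phi id = id.
  have id_inj := aut_inf_inj (PhiA _ (aut_inf_id p)).
  apply: functional_extensionality => x; apply: id_inj.
  by have := f_equal (fun F => F x) (PhiM _ _ (aut_inf_id p) (aut_inf_id p)).
have Phi_iter f k : aut_inf f -> Phi (iter k f) = iter k (Phi f).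
  move=> fA; elim: k => [|k IH]; first exact: Phi_id.
  by rewrite -[iter k.+1 f]/(f \o iter k f) PhiM ?IH //; apply: aut_inf_iter.
have [g' g'A Phi_g'] := Phi_surj g gA.
exists g'; split => //.
  by move=> k k_gt0 g'k; apply: (g_ord k k_gt0); rewrite -Phi_g' -Phi_iter // g'k.
move=> n n_gt0 co_ns; have [h hA hn] := g_root n n_gt0 co_ns.
have [h' h'A Phi_h'] := Phi_surj h hA.
exists h' => //; apply: Phi_inj; [exact: aut_inf_iter | exact: g'A |].
by rewrite Phi_iter // Phi_h' hn Phi_g'.
Qed.

Section Translations.
Variable p : scale.
Implicit Types (x y z : odometer p) (w : nat -> int).

Definition int_resid w n : nat := `|(w n %% (p n)%:Z)%Z|%N.

Lemma int_residE w n : ((int_resid w n)%:Z = (w n %% (p n)%:Z)%Z)%R.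
Proof. by rewrite /int_resid gez0_abs // modz_ge0 // eqz_nat -lt0n sc_pos. Qed.

Lemma int_resid_eqmz w n : eqmz (p n) (int_resid w n)%:Z (w n).
Proof.
rewrite int_residE; exists (- (w n %/ (p n)%:Z)%Z)%R.
rewrite {2}(divz_eq (w n) (p n)%:Z); ring.
Qed.

Lemma int_resid_lt w n : int_resid w n < p n.
Proof. by rewrite -ltz_nat int_residE ltz_pmod // ltz_nat sc_pos. Qed.

Lemma int_resid_proof w : (forall n, eqmz (p n) (w n.+1) (w n)) -> odo_pred p (int_resid w).
Proof.
move=> wC n; split; first exact: int_resid_lt.
apply: (@eqmz_small (p n)); [by rewrite ltn_pmod // sc_pos | exact: int_resid_lt |].
apply: eqmz_trans (eqmz_modn _ _) _.
apply: eqmz_trans (eqmz_dvd (sc_dvd p n) (int_resid_eqmz w n.+1)) _.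
exact: eqmz_trans (wC n) (eqmz_sym (int_resid_eqmz w n)).
Qed.

Definition odo_of w (wC : forall n, eqmz (p n) (w n.+1) (w n)) : odometer p :=
  exist _ (int_resid w) (int_resid_proof wC).

Lemma resid_odo_of w wC n : eqmz (p n) (resid (@odo_of w wC) n)%:Z (w n).
Proof. exact: int_resid_eqmz. Qed.

Lemma resid_odoT x n : eqmz (p n) (resid (odoT x) n)%:Z ((resid x n)%:Z + 1)%R.
Proof. exact: resid_iterT_eqmz x 1 n. Qed.

Lemma transl_compat z y n :
  eqmz (p n) ((resid y n.+1)%:Z + (resid z n.+1)%:Z)%R ((resid y n)%:Z + (resid z n)%:Z)%R.
Proof. by apply: eqmzD; apply: resid_eqmz. Qed.

Definition transl z y : odometer p := odo_of (transl_compat z y).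

Lemma resid_transl z y n :
  eqmz (p n) (resid (transl z y) n)%:Z ((resid y n)%:Z + (resid z n)%:Z)%R.
Proof. exact: int_resid_eqmz. Qed.

Lemma opp_compat z n : eqmz (p n) (- (resid z n.+1)%:Z)%R (- (resid z n)%:Z)%R.
Proof. by have [k E] := resid_eqmz z (leqnSn n); exists (- k)%R; lia. Qed.

Definition odo_opp z : odometer p := odo_of (opp_compat z).

Lemma resid_odo_opp z n : eqmz (p n) (resid (odo_opp z) n)%:Z (- (resid z n)%:Z)%R.
Proof. exact: int_resid_eqmz. Qed.

Lemma transl_opp z : cancel (transl z) (transl (odo_opp z)).
Proof.
move=> y; apply: odo_eqmz => n; apply: eqmz_trans (resid_transl _ _ _) _.
have [k1 E1] := resid_transl z y n; have [k2 E2] := resid_odo_opp z n.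
by exists (k1 + k2)%R; lia.
Qed.

Lemma opp_transl z : cancel (transl (odo_opp z)) (transl z).
Proof.
move=> y; apply: odo_eqmz => n; apply: eqmz_trans (resid_transl _ _ _) _.
have [k1 E1] := resid_transl (odo_opp z) y n; have [k2 E2] := resid_odo_opp z n.
by exists (k1 + k2)%R; lia.
Qed.

Lemma odo_continuous_transl z : odo_continuous (transl z).
Proof.
move=> x n; exists n => y.
change (resid y n = resid x n -> resid (transl z y) n = resid (transl z x) n) => xy.
apply: (@eqmz_small (p n)); try exact: resid_lt.
by apply: eqmz_trans (resid_transl _ _ _) _; rewrite xy; apply: eqmz_sym (resid_transl _ _ _).
Qed.

Lemma aut_inf_transl z : aut_inf (transl z).
Proof.
split.
  exists (transl (odo_opp z)); do !split; try exact: odo_continuous_transl.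
  - exact: transl_opp.
  - exact: opp_transl.
exists 1; split => // x /=; apply: odo_eqmz => n.
have [k1 E1] := resid_transl z (odoT x) n; have [k2 E2] := resid_odoT x n.
have [k3 E3] := resid_odoT (transl z x) n; have [k4 E4] := resid_transl z x n.
by exists (k1 + k2 - k3 - k4)%R; lia.
Qed.

Lemma resid_iter_transl z y k n :
  eqmz (p n) (resid (iter k (transl z) y) n)%:Z ((resid y n)%:Z + k%:Z * (resid z n)%:Z)%R.
Proof.
elim: k => [|k IH]; first by apply: eqmz_eq; rewrite mul0r addr0.
have [k1 E1] := resid_transl z (iter k (transl z) y) n; case: IH => k2 E2.
by exists (k1 + k2)%R; rewrite iterS -[k.+1]addn1 PoszD; lia.
Qed.

End Translations.

Section SDivisibleOfVInfty.
Variables (q : scale) (s : nat).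
Hypotheses (s_prime : prime s) (q_s_infty : v_infty q s).

Let sq n := (q n)`_s.
Let s'q n := (q n)`_s^'.

Let sq_s'q n : sq n * s'q n = q n.
Proof. by rewrite partnC // sc_pos. Qed.

Let sq_dvd_q n : sq n %| q n.
Proof. by rewrite -sq_s'q dvdn_mulr. Qed.

Let s'q_dvd_q n : s'q n %| q n.
Proof. by rewrite -sq_s'q dvdn_mull. Qed.

Let sq_dvd n : sq n %| sq n.+1.
Proof. by rewrite partn_dvd ?sc_pos ?sc_dvd. Qed.

Let s'q_dvd n : s'q n %| s'q n.+1.
Proof. by rewrite partn_dvd ?sc_pos ?sc_dvd. Qed.

Let coprime_sq_s'q n : coprime (sq n) (s'q n).
Proof. exact: coprime_partC. Qed.

Let eqmz_q n a b : eqmz (sq n) a b -> eqmz (s'q n) a b -> eqmz (q n) a b.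
Proof. by rewrite -sq_s'q; apply: eqmz_crt. Qed.

Let s_lift n a := zchinese (sq n)%:Z (s'q n)%:Z a 0%R.

Let s_lift_sq n a : eqmz (sq n) (s_lift n a) a.
Proof. exact: (eqmz_zchinese a 0%R (coprime_sq_s'q n)).1. Qed.

Let s_lift_s'q n a : eqmz (s'q n) (s_lift n a) 0%R.
Proof. exact: (eqmz_zchinese a 0%R (coprime_sq_s'q n)).2. Qed.

Let s_lift_compat (a : nat -> int) :
  (forall n, eqmz (sq n) (a n.+1) (a n)) ->
  forall n, eqmz (q n) (s_lift n.+1 (a n.+1)) (s_lift n (a n)).
Proof.
move=> aC n; apply: eqmz_q.
  apply: eqmz_trans (eqmz_dvd (sq_dvd n) (s_lift_sq _ _)) _.
  exact: eqmz_trans (aC n) (eqmz_sym (s_lift_sq _ _)).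
exact: eqmz_trans (eqmz_dvd (s'q_dvd n) (s_lift_s'q _ _)) (eqmz_sym (s_lift_s'q _ _)).
Qed.

Let s_unit : odometer q := odo_of (@s_lift_compat (fun _ => 1%R) (fun n => eqmz_refl _ _)).

Let s_unit_sq n : eqmz (sq n) (resid s_unit n)%:Z 1%R.
Proof. exact: eqmz_trans (eqmz_dvd (sq_dvd_q n) (resid_odo_of _ n)) (s_lift_sq _ _). Qed.

Let s_unit_s'q n : eqmz (s'q n) (resid s_unit n)%:Z 0%R.
Proof. exact: eqmz_trans (eqmz_dvd (s'q_dvd_q n) (resid_odo_of _ n)) (s_lift_s'q _ _). Qed.

Let transl_s_unit_inf_order k : 0 < k -> iter k (transl s_unit) <> id.
Proof.
move=> k_gt0 s_unit_k.
have [N /(_ N (leqnn N)) logN] := q_s_infty k.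
have Nk : eqmz (sq N) k%:Z 0%R.
  have := eqmz_dvd (sq_dvd_q N) (resid_iter_transl s_unit (odo_zero q) k N).
  have zero : resid (odo_zero q) N = 0 by [].
  rewrite s_unit_k /id zero; have [k2 E2] := eqmzMl k%:Z (s_unit_sq N) => - [k1 E1].
  by exists (- k1 - k2)%R; lia.
have /(dvdn_leq k_gt0) : s ^ k %| k.
  apply: dvdn_trans (_ : sq N %| k); first by rewrite /sq p_part dvdn_exp2l.
  by move/eqmz_nat: Nk; rewrite mod0n /dvdn => ->.
by rewrite leqNgt ltn_expl // prime_gt1.
Qed.

Section Root.
Variable m : nat.
Hypothesis coprime_ms : coprime m s.

Let coprime_sq_m n : coprime (sq n) m.
Proof. by rewrite /sq p_part coprimeXl // coprime_sym. Qed.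

Let inv_m n : int := sval (projT2 (Bezoutz (sq n)%:Z m%:Z)).

Let inv_mP n : eqmz (sq n) (inv_m n * m%:Z)%R 1%R.
Proof.
rewrite /inv_m; case: (Bezoutz _ _) => a [b /= E].
have gcd1 : gcdz (sq n)%:Z m%:Z = 1%R by apply/eqP; apply: coprime_sq_m.
by rewrite gcd1 in E; exists (- a)%R; lia.
Qed.

Let inv_m_compat n : eqmz (sq n) (inv_m n.+1) (inv_m n).
Proof.
have [k1 E1] := eqmz_dvd (sq_dvd n) (inv_mP n.+1).
have [k2 E2] := inv_mP n.
by exists (inv_m n * k1 - inv_m n.+1 * k2)%R; rewrite mulrBl -!mulrA -E1 -E2; ring.
Qed.

Let s_unit_root : odometer q := odo_of (s_lift_compat inv_m_compat).

Let s_unit_rootP n : eqmz (q n) (m%:Z * (resid s_unit_root n)%:Z)%R (resid s_unit n)%:Z.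
Proof.
have root_sq : eqmz (sq n) (resid s_unit_root n)%:Z (inv_m n).
  exact: eqmz_trans (eqmz_dvd (sq_dvd_q n) (resid_odo_of _ n)) (s_lift_sq _ _).
have root_s'q : eqmz (s'q n) (resid s_unit_root n)%:Z 0%R.
  exact: eqmz_trans (eqmz_dvd (s'q_dvd_q n) (resid_odo_of _ n)) (s_lift_s'q _ _).
apply: eqmz_q; apply: eqmz_trans (eqmzMl _ _) _; [exact: root_sq | | exact: root_s'q |].
  by rewrite mulrC; apply: eqmz_trans (inv_mP n) (eqmz_sym (s_unit_sq n)).
by rewrite mulr0; apply: eqmz_sym (s_unit_s'q n).
Qed.

Lemma transl_s_unit_has_root : exists2 h, aut_inf h & iter m h = transl s_unit.
Proof.
exists (transl s_unit_root); first exact: aut_inf_transl.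
apply: functional_extensionality => y; apply: odo_eqmz => n.
have [k1 E1] := resid_iter_transl s_unit_root y m n; have [k2 E2] := s_unit_rootP n.
by have [k3 E3] := resid_transl s_unit y n; exists (k1 + k2 - k3)%R; lia.
Qed.

End Root.

Lemma s'divisible_elt_of_v_infty : has_s'divisible_elt q s.
Proof.
exists (transl s_unit); split; [exact: aut_inf_transl | exact: transl_s_unit_inf_order |].
by move=> n _; apply: transl_s_unit_has_root.
Qed.

End SDivisibleOfVInfty.

Lemma eqmz_mul_gcdn (K P : nat) (c : int) : 0 < P ->
  exists j : nat, eqmz P (j * K)%N%:Z (c * (gcdn K P)%:Z)%R.
Proof.
move=> P_gt0; have [a [b E]] := Bezoutz K%:Z P%:Z.
have P_neq0 : (P%:Z != 0)%R by rewrite eqz_nat -lt0n.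
exists `|((a * c) %% P%:Z)%Z|%N; rewrite PoszM gez0_abs ?modz_ge0 //.
have [k1 E1] : eqmz P ((a * c) %% P%:Z)%Z (a * c)%R.
  by exists (- ((a * c) %/ P%:Z)%Z)%R; rewrite {2}(divz_eq (a * c) P%:Z); ring.
have EK : ((((a * c) %% P%:Z)%Z - a * c) * K%:Z = k1 * P%:Z * K%:Z)%R by rewrite E1.
have Eg : ((a * K%:Z + b * P%:Z) * c = (gcdn K P)%:Z * c)%R by rewrite E.
by exists (k1 * K%:Z - b * c)%R; lia.
Qed.

Lemma gcdn_scale_stable (p : scale) K : 0 < K ->
  exists M, forall M', M <= M' -> gcdn K (p M') = gcdn K (p M).
Proof.
move=> K_gt0; apply: (@bounded_homo_stable _ K) => [n|m n le_mn].
  by apply: dvdn_leq => //; apply: dvdn_gcdl.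
apply: dvdn_leq; first by rewrite gcdn_gt0 K_gt0.
by rewrite dvdn_gcd dvdn_gcdl (dvdn_trans (dvdn_gcdr _ _) (scale_dvd p le_mn)).
Qed.

(** [f x - x] only depends on the class of [x] modulo [p M]. *)
Definition level (p : scale) (f : odometer p -> odometer p) (M : nat) : Prop :=
  forall x y : odometer p, resid x M = resid y M -> forall n,
    eqmz (p n) ((resid (f x) n)%:Z + (resid y n)%:Z)%R ((resid (f y) n)%:Z + (resid x n)%:Z)%R.

(** If [f] commutes with [T^K], the translations [T^(j K)] move [x] to any [y] in its
    class modulo [p M] at every finite level, once [gcd(K, p M)] has stabilised. *)
Lemma aut_inf_level (p : scale) (f : odometer p -> odometer p) :
  aut_inf f -> exists M, level f M.
Proof.
move=> [[_ [_ [_ [fC _]]]] [K [K_gt0 fK]]].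
have [M gcd_stable] := gcdn_scale_stable p K_gt0.
exists M => x y xy n; have [m yC] := fC y n.
set M' := maxn m (maxn M n).
have [le_mM' le_MM' le_nM'] : [/\ m <= M', M <= M' & n <= M'].
  by split; rewrite /M'; lia.
have [c Ec] : eqmz (gcdn K (p M')) (resid y M')%:Z (resid x M')%:Z.
  rewrite gcd_stable //; apply: eqmz_dvd (dvdn_gcdr _ _) _.
  by apply: eqmz_trans (resid_eqmz y le_MM') _; rewrite -xy; apply: eqmz_sym (resid_eqmz x le_MM').
have [j [k Ej]] := eqmz_mul_gcdn K c (sc_pos p M').
set z := iter (j * K) (@odoT p) x.
have zy : resid z M' = resid y M'.
  apply: (@eqmz_small (p M')); try exact: resid_lt.
  have [k1 E1] := resid_iterT_eqmz x (j * K) M'.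
  by exists (k1 + k)%R; rewrite /z; lia.
have fzy : resid (f z) n = resid (f y) n.
  apply: yC; change (resid z m = resid y m).
  by rewrite -(resid_mod z le_mM') -(resid_mod y le_mM') zy.
have [k1 E1] := resid_iterT_eqmz (f x) (j * K) n.
have [k2 E2] := eqmz_dvd (scale_dvd p le_nM') (resid_iterT_eqmz x (j * K) M').
have [k3 E3] := resid_eqmz y le_nM'; have [k4 E4] := resid_eqmz x le_nM'.
rewrite -/z zy in E2; rewrite -(comm_iterM fK) -/z fzy in E1.
by exists (k2 - k1 - k3 + k4)%R; lia.
Qed.

Section Levels.
Variable p : scale.
Implicit Types (f g : odometer p -> odometer p) (x y : odometer p).

Lemma level_le f M M' : level f M -> M <= M' -> level f M'.
Proof. by move=> fM le_MM' x y xy; apply: fM; rewrite -(resid_mod x le_MM') xy resid_mod. Qed.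

Lemma level_resid f M x y : level f M -> resid x M = resid y M -> resid (f x) M = resid (f y) M.
Proof.
move=> fM xy; have [k E] := fM x y xy M; rewrite xy in E.
by apply: (@eqmz_small (p M)); try exact: resid_lt; exists k; lia.
Qed.

Lemma level_id M : level (@id (odometer p)) M.
Proof. by move=> x y _ n; apply: eqmz_eq; rewrite addrC. Qed.

Lemma level_comp f g M : level f M -> level g M -> level (f \o g) M.
Proof.
move=> fM gM x y xy n /=.
have [k1 E1] := fM _ _ (level_resid gM xy) n; have [k2 E2] := gM _ _ xy n.
by exists (k1 + k2)%R; lia.
Qed.

Lemma level_iter f M k : level f M -> level (iter k f) M.
Proof.
move=> fM; elim: k => [|k IH]; first exact: level_id.
exact: level_comp fM IH.
Qed.

Lemma aut_inf_level_inv f M0 : aut_inf f ->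
  exists M f', [/\ M0 <= M, cancel f f', level f M & level f' M].
Proof.
move=> fA; have [f' f'A [ff' _]] := aut_inf_inv fA.
have [[M1 fM1] [M2 f'M2]] := (aut_inf_level fA, aut_inf_level f'A).
exists (maxn M0 (maxn M1 M2)), f'; split => //; first exact: leq_maxl.
  by apply: level_le fM1 _; rewrite !leq_max leqnn orbT.
by apply: level_le f'M2 _; rewrite !leq_max leqnn !orbT.
Qed.

Definition shift f (n a : nat) : int := ((resid (f (odo_nat p a)) n)%:Z - a%:Z)%R.

Lemma level_shift f M y n : level f M ->
  eqmz (p n) (resid (f y) n)%:Z ((resid y n)%:Z + shift f n (resid y M))%R.
Proof.
move=> fM; have [k1 E1] := fM _ _ (resid_odo_nat_small y M) n.
have [k2 E2] := resid_odo_nat_eqmz p (resid y M) n.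
by exists (- k1 - k2)%R; rewrite /shift; lia.
Qed.

Lemma shift_eqmz f L0 L a : L0 <= L -> eqmz (p L0) (shift f L a) (shift f L0 a).
Proof. by move=> le_L0L; apply: eqmzB; [apply: resid_eqmz | apply: eqmz_refl]. Qed.

Definition resid_ord y M : 'I_(p M) := Ordinal (resid_lt y M).

Lemma resid_ord_odo_nat M (a : 'I_(p M)) : resid_ord (odo_nat p a) M = a.
Proof. by apply: val_inj; rewrite /= resid_odo_nat modn_small. Qed.

Definition class_perm f M (a : 'I_(p M)) : 'I_(p M) := resid_ord (f (odo_nat p a)) M.

Lemma class_perm_resid f M y : level f M -> class_perm f (resid_ord y M) = resid_ord (f y) M.
Proof. by move=> fM; apply: val_inj => /=; apply: level_resid fM _; apply: resid_odo_nat_small. Qed.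

Lemma class_perm_iter f M y j : level f M ->
  iter j (@class_perm f M) (resid_ord y M) = resid_ord (iter j f y) M.
Proof. by move=> fM; elim: j => [|j IH] //=; rewrite IH class_perm_resid. Qed.

Lemma class_perm_inj f f' M : level f M -> level f' M -> cancel f f' ->
  injective (@class_perm f M).
Proof.
move=> fM f'M ff' a b /(f_equal val) /= /(level_resid f'M).
by rewrite !ff' !resid_odo_nat !modn_small // => /val_inj.
Qed.

Definition fixes_classes f M : Prop := forall y, resid (f y) M = resid y M.

Lemma class_fixing_power f f' M : level f M -> level f' M -> cancel f f' ->
  exists2 e, 0 < e & fixes_classes (iter e f) M.
Proof.
move=> fM f'M ff'; exists #|'I_(p M)|`!; first exact: fact_gt0.
move=> y; have := f_equal val (class_perm_iter y #|'I_(p M)|`! fM).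
by rewrite iter_fact_card //; apply: class_perm_inj ff'.
Qed.

Lemma fixes_classes_iter f M j : fixes_classes f M -> fixes_classes (iter j f) M.
Proof. by move=> fM; elim: j => [|j IH] y //=; rewrite fM IH. Qed.

Lemma resid_iter_fixes_classes f M j y n : level f M -> fixes_classes f M ->
  eqmz (p n) (resid (iter j f y) n)%:Z ((resid y n)%:Z + j%:Z * shift f n (resid y M))%R.
Proof.
move=> fM f_fix; elim: j => [|j IH]; first by apply: eqmz_eq; rewrite mul0r addr0.
have [k1 E1] := level_shift (iter j f y) n fM; rewrite (fixes_classes_iter j f_fix) in E1.
by case: IH => k2 E2; exists (k1 + k2)%R; rewrite iterS -[j.+1]addn1 PoszD; lia.
Qed.

Lemma shift_iter_fixes_classes f M j n a : level f M -> fixes_classes f M -> a < p M ->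
  eqmz (p n) (shift (iter j f) n a) (j%:Z * shift f n a)%R.
Proof.
move=> fM f_fix lt_a; have := resid_iter_fixes_classes j (odo_nat p a) n fM f_fix.
rewrite (resid_odo_nat p a M) (modn_small lt_a) => - [k1 E1].
have [k2 E2] := resid_odo_nat_eqmz p a n.
by exists (k1 + k2)%R; rewrite {1}/shift; lia.
Qed.

End Levels.

Lemma sum1_periodic (W : pred nat) P0 Q : (forall a, W a = W (a %% P0)) ->
  \sum_(0 <= a < Q * P0 | W a) 1 = Q * \sum_(0 <= b < P0 | W b) 1.
Proof.
move=> W_mod; elim: Q => [|Q IH]; first by rewrite mul0n big_geq.
have shift_P0 : \sum_(P0 <= a < P0 + Q * P0 | W a) 1 = \sum_(0 <= a < Q * P0 | W a) 1.
  rewrite -{1}[P0]add0n big_addn addKn.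
  by apply: eq_bigl => i; rewrite W_mod [in RHS]W_mod modnDr.
by rewrite mulSn (@big_cat_nat _ _ _ P0) //= ?leq_addr // shift_P0 IH mulSn.
Qed.

Lemma pfactor_dvd_mul_cancel r m j z : prime r -> 0 < m ->
  r ^ (logn r m + j) %| m * z -> r ^ j %| z.
Proof.
move=> r_prime m_gt0; have [-> _|z_gt0] := posnP z; first exact: dvdn0.
by rewrite !pfactor_dvdn ?muln_gt0 ?m_gt0 // lognM //; lia.
Qed.

(** [S] brings a factor [Q], so [r^(2 v_r(Q) + P0 + j)] divides the left-hand side,
    while [v_r(Q t Q) < 2 v_r(Q) + P0] because [v_r(t) < t <= P0]. *)
Lemma dvd_of_root_congr r Q P0 t j d (S x : int) :
  prime r -> 0 < Q -> 0 < t -> t <= P0 ->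
  r ^ (2 * logn r Q + P0 + j) %| d -> eqmz (Q * P0) S 0%R ->
  eqmz d ((Q * r ^ (P0 + j))%N%:Z * S)%R ((Q * t * Q)%N%:Z * x)%R ->
  r ^ j %| `|x|%N.
Proof.
move=> r_prime Q_gt0 t_gt0 le_tP0 dvd_d [kS ES] congr.
set m := Q * t * Q.
have m_gt0 : 0 < m by rewrite !muln_gt0 Q_gt0 t_gt0.
have logm : logn r m = logn r Q + logn r Q + logn r t.
  by rewrite !lognM ?muln_gt0 ?Q_gt0 ?t_gt0 // addnAC.
have le_logm : logn r m + j <= 2 * logn r Q + P0 + j.
  by have := ltn_logl r t_gt0; rewrite logm; lia.
apply: (pfactor_dvd_mul_cancel (m := m)) => //.
have dvd_NS : r ^ (logn r m + j) %| `|((Q * r ^ (P0 + j))%N%:Z * S)%R|%N.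
  rewrite subr0 in ES; rewrite ES !abszM !absz_nat.
  have -> : Q * r ^ (P0 + j) * (`|kS| * (Q * P0)) = Q * Q * r ^ (P0 + j) * (`|kS| * P0) by ring.
  have -> : r ^ (logn r m + j) = r ^ logn r Q * r ^ logn r Q * r ^ (logn r t + j).
    by rewrite logm -!expnD !addnA.
  apply/dvdn_mulr/dvdn_mul; first by apply: dvdn_mul; apply: pfactor_dvdnn.
  by rewrite dvdn_exp2l //; have := ltn_logl r t_gt0; lia.
have dvd_diff := eqmz_dvd (dvdn_trans (dvdn_exp2l r le_logm) dvd_d) congr.
have /eqmz0_dvd := eqmz_trans (eqmz_sym dvd_diff) (iffRL (eqmz0_dvd _ _) dvd_NS).
by rewrite abszM absz_nat.
Qed.

Lemma logn_scale_le (p : scale) r n m : n <= m -> logn r (p n) <= logn r (p m).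
Proof. by move=> le_nm; apply: dvdn_leq_log; [apply: sc_pos | apply: scale_dvd]. Qed.

Lemma not_v_infty_bounded (p : scale) r : ~ v_infty p r -> exists B, forall L, logn r (p L) < B.
Proof.
move=> /not_all_ex_not [B noN]; exists B => L; rewrite ltnNge; apply/negP => le_BL.
by apply: noN; exists L => n le_Ln; apply: leq_trans le_BL (logn_scale_le _ _ le_Ln).
Qed.

Lemma finite_torsion_exponent (p : scale) : finite_torsion p ->
  exists2 E, 0 < E & forall r L, prime r -> ~ v_infty p r -> r ^ logn r (p L) %| E.
Proof.
move=> [N ftN].
have [E E_gt0 EN] : exists2 E, 0 < E &
    forall r L, r < N -> prime r -> ~ v_infty p r -> r ^ logn r (p L) %| E.
  elim: N {ftN} => [|N [E E_gt0 EN]]; first by exists 1.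
  case: (classic (prime N /\ ~ v_infty p N)) => [[N_prime /not_v_infty_bounded [B NB]]|N_inf].
    exists (E * N ^ B) => [|r L]; first by rewrite muln_gt0 E_gt0 expn_gt0 prime_gt0.
    rewrite ltnS leq_eqVlt => /orP [/eqP -> _ _|lt_rN r_prime r_fin].
      by rewrite dvdn_mull // dvdn_exp2l // ltnW.
    by apply: dvdn_mulr; apply: EN.
  exists E => // r L; rewrite ltnS leq_eqVlt => /orP [/eqP -> r_prime r_fin|lt_rN].
    by case: N_inf.
  exact: EN.
exists E => // r L r_prime r_fin; case: (ltnP r N) => [lt_rN|le_Nr]; first exact: EN.
case: (ftN r r_prime le_Nr) => [[N' logN']|//].
suff -> : logn r (p L) = 0 by rewrite dvd1n.
by apply/eqP; rewrite -leqn0 -(logN' (maxn L N')) ?leq_maxr // logn_scale_le // leq_maxl.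
Qed.

Lemma v_infty_prime_witness (p : scale) E L0 (x w : int) :
  (forall r, prime r -> ~ v_infty p r -> r ^ logn r (p L0) %| E) ->
  ~ (p L0 %| `|x|%N) -> eqmz (p L0) x (E%:Z * w)%R ->
  exists r, [/\ prime r, v_infty p r & ~ (r ^ logn r (p L0) %| `|x|%N)].
Proof.
move=> ET ndvd xw.
have [r r_pi r_ndvd] : exists2 r, r \in \pi(p L0) & ~ (r ^ logn r (p L0) %| `|x|%N).
  apply: NNPP => all_dvd; apply: ndvd; apply/(dvdn_partP _ (sc_pos p L0)) => r r_pi.
  by rewrite p_part; apply: NNPP => r_ndvd; apply: all_dvd; exists r.
have r_prime : prime r by move: r_pi; rewrite mem_primes => /andP [].
exists r; split => //; apply: NNPP => r_fin; apply: r_ndvd; apply/eqmz0_dvd.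
apply: eqmz_trans (eqmz_dvd (pfactor_dvdnn r (p L0)) xw) _.
by apply/eqmz0_dvd; rewrite abszM absz_nat dvdn_mulr // ET.
Qed.

Section RootCounting.
Variables (p : scale) (g h h' : odometer p -> odometer p) (M0 M L Q N b0 : nat).
Hypotheses (le_M0M : M0 <= M) (le_ML : M <= L).
Hypotheses (gM0 : level g M0) (g_fix : fixes_classes g M0).
Hypotheses (hM : level h M) (h'M : level h' M) (hh' : cancel h h').
Hypotheses (QP0 : Q * p M0 = p M) (hN : iter N h = iter Q g) (lt_b0 : b0 < p M0).

Local Notation P := (p M).
Local Notation P0 := (p M0).
Local Notation G := (iter Q g).
Local Notation sigma := (@class_perm p h M).

Let GM : level G M.
Proof. exact: level_le (level_iter Q gM0) le_M0M. Qed.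

Let sigma_inj : injective sigma.
Proof. exact: class_perm_inj hM h'M hh'. Qed.

Let shift_G n a : a < P -> eqmz (p n) (shift G n a) (Q%:Z * shift g n (a %% P0))%R.
Proof.
move=> lt_a; have := resid_iter_fixes_classes Q (odo_nat p a) n gM0 g_fix.
rewrite (resid_odo_nat p a M0) => - [k1 E1].
have [k2 E2] := resid_odo_nat_eqmz p a n.
by exists (k1 + k2)%R; rewrite {1}/shift; lia.
Qed.

Let shift_g_M0 b : b < P0 -> shift g M0 b = 0%R.
Proof. by move=> lt_b; rewrite /shift g_fix resid_odo_nat modn_small // subrr. Qed.

(** [G = g^Q] fixes the classes modulo [P = Q P0] since [g] shifts each class modulo
    [P0] by a multiple of [P0]. *)
Let G_fix : fixes_classes G M.
Proof.
move=> y; apply: (@eqmz_small P); try exact: resid_lt.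
have [k1 E1] := resid_iter_fixes_classes Q y M gM0 g_fix.
have [k2 E2] := shift_eqmz g (resid y M0) le_M0M.
rewrite shift_g_M0 ?resid_lt // subr0 in E2.
by exists (k1 + k2)%R; rewrite -QP0 PoszM E2 in E1 *; lia.
Qed.

(** [G = h^N] commutes with [h], so its shifts are constant along the orbits of [sigma]. *)
Let shift_G_sigma n (a : 'I_P) : eqmz (p n) (shift G n (sigma a)) (shift G n a).
Proof.
set y := odo_nat p a.
have hG : h (G y) = G (h y) by rewrite -hN -iterSr.
have ya : resid y M = a by rewrite /y resid_odo_nat modn_small.
have [k1 E1] := level_shift (G y) n hM; rewrite G_fix ya hG in E1.
have [k2 E2] := level_shift (h y) n GM; rewrite -[resid (h y) M]/(sigma a : nat) in E2.
have shift_ya f : shift f n a = ((resid (f y) n)%:Z - a%:Z)%R by [].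
by exists (k1 - k2)%R; rewrite shift_ya in E1; rewrite (shift_ya G); lia.
Qed.

Let resid_iter_h j (a : 'I_P) : eqmz (p L) (resid (iter j h (odo_nat p a)) L)%:Z
   (a%:Z + \sum_(0 <= i < j) shift h L (iter i sigma a))%R.
Proof.
elim: j => [|j IH]; first by rewrite big_geq // addr0 /=; apply: resid_odo_nat_eqmz.
have [k1 E1] := level_shift (iter j h (odo_nat p a)) L hM.
have sigma_j : resid (iter j h (odo_nat p a)) M = iter j sigma a.
  by have := f_equal val (class_perm_iter (odo_nat p a) j hM); rewrite resid_ord_odo_nat.
rewrite sigma_j in E1.
have -> : (\sum_(0 <= i < j.+1) shift h L (iter i sigma a) =
  \sum_(0 <= i < j) shift h L (iter i sigma a) + shift h L (iter j sigma a))%R.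
  by rewrite big_nat_recr.
by rewrite iterS; case: IH => k2 E2; exists (k1 + k2)%R; lia.
Qed.

Let shift_h_P (a : 'I_P) : eqmz P (shift h L a) ((sigma a : nat)%:Z - a%:Z)%R.
Proof. by apply: eqmzB; [apply: resid_eqmz | apply: eqmz_refl]. Qed.

(** The classes modulo [P] on which [G] shifts by the same amount as on [b0]. *)
Let same_shift (b : nat) : bool :=
  classicb (forall n, eqmz (p n) (Q%:Z * shift g n (b %% P0))%R (Q%:Z * shift g n b0)%R).

Let same_shift_sigma (a : 'I_P) : same_shift (sigma a) = same_shift a.
Proof.
have eq_shift n : eqmz (p n) (Q%:Z * shift g n (sigma a %% P0))%R (Q%:Z * shift g n (a %% P0))%R.
  apply: eqmz_trans (eqmz_sym (shift_G n (ltn_ord (sigma a)))) _.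
  exact: eqmz_trans (shift_G_sigma n a) (shift_G n (ltn_ord a)).
apply/classicbP/classicbP => same n.
  exact: eqmz_trans (eqmz_sym (eq_shift n)) (same n).
exact: eqmz_trans (eq_shift n) (same n).
Qed.

Let sum_same_shift_perm (f : 'I_P -> 'I_P) (F : 'I_P -> int) :
  injective f -> (forall a, same_shift (f a) = same_shift a) ->
  (\sum_(a : 'I_P | same_shift a) F (f a) = \sum_(a : 'I_P | same_shift a) F a)%R.
Proof.
by move=> f_inj f_same; rewrite [RHS](reindex_inj f_inj); apply: eq_bigl => a; rewrite f_same.
Qed.

Let shift_sum : int := (\sum_(a : 'I_P | same_shift a) shift h L a)%R.

Let count_same : nat := \sum_(0 <= b < P0 | same_shift b) 1.

Let shift_sum_P : eqmz P shift_sum 0%R.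
Proof.
apply: eqmz_trans (eqmz_sum _ (fun a _ => shift_h_P a)) _.
rewrite sumrB (sum_same_shift_perm (fun a : 'I_P => Posz a) sigma_inj same_shift_sigma).
by rewrite subrr; apply: eqmz_refl.
Qed.

Let sum_shift_G_h :
  eqmz (p L) (\sum_(a : 'I_P | same_shift a) shift G L a)%R (N%:Z * shift_sum)%R.
Proof.
have shift_G_h (a : 'I_P) : same_shift a ->
    eqmz (p L) (shift G L a) (\sum_(0 <= i < N) shift h L (iter i sigma a))%R.
  move=> _; have [k E] := resid_iter_h N a; rewrite hN in E.
  by exists k; rewrite {1}/shift; lia.
apply: eqmz_trans (eqmz_sum _ shift_G_h) _; rewrite exchange_big.
have same_iter i (a : 'I_P) : same_shift (iter i sigma a) = same_shift a.
  by elim: i => [|i IH] //=; rewrite same_shift_sigma.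
have sum_iter i : (\sum_(a : 'I_P | same_shift a) shift h L (iter i sigma a) = shift_sum)%R.
  exact: sum_same_shift_perm (shift h L) (@iter_inj _ _ i sigma_inj) (same_iter i).
by rewrite (eq_bigr _ (fun i _ => sum_iter i)) sumr_const_nat subn0 -mulr_natl natz; apply: eqmz_refl.
Qed.

Let sum_shift_G_g : eqmz (p L) (\sum_(a : 'I_P | same_shift a) shift G L a)%R
  ((\sum_(a : 'I_P | same_shift a) 1)%N%:Z * (Q%:Z * shift g L b0))%R.
Proof.
have shift_G_b0 (a : 'I_P) : same_shift a -> eqmz (p L) (shift G L a) (Q%:Z * shift g L b0)%R.
  by move=> /classicbP same; apply: eqmz_trans (shift_G L (ltn_ord a)) (same L).
apply: eqmz_trans (eqmz_sum _ shift_G_b0) _.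
have -> : ((\sum_(a : 'I_P | same_shift a) 1)%N%:Z = \sum_(a : 'I_P | same_shift a) 1)%R.
  by rewrite -natz natr_sum.
by rewrite mulr_suml; apply: eqmz_eq; apply: eq_bigr => a _; rewrite mul1r.
Qed.

Let card_same_shift : \sum_(a : 'I_P | same_shift a) 1 = Q * count_same.
Proof.
rewrite -(big_mkord same_shift (fun _ => 1)) -QP0.
by apply: sum1_periodic => b; rewrite /same_shift modn_mod.
Qed.

Let count_same_gt0 : 0 < count_same.
Proof.
have same_b0 : same_shift b0 by apply/classicbP => n; rewrite modn_small //; apply: eqmz_refl.
rewrite /count_same big_mkcond (bigD1_seq b0) ?iota_uniq ?same_b0 //.
by rewrite mem_iota add0n subn0 lt_b0.
Qed.

Let count_same_le : count_same <= P0.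
Proof.
apply: leq_trans (_ : \sum_(0 <= b < P0) 1 <= P0); last by rewrite sum_nat_const_nat subn0 muln1.
by rewrite /count_same big_mkcond; apply: leq_sum => b _; case: same_shift.
Qed.

(** Add up the shifts of [G] over the [sigma]-stable set of classes modulo [P] on which
    [G] shifts as on [b0].  Through [G = h^N] the sum is [N] times a sum over whole
    [sigma]-orbits, which vanishes modulo [P]; through [G = g^Q] it is [Q t] times the
    common shift [Q (shift g L b0)], with [t <= P0] the number of such classes modulo [P0]. *)
Lemma root_shift_congr : exists t (S : int), [/\ 0 < t, t <= P0, eqmz (Q * P0) S 0%R &
  eqmz (p L) (N%:Z * S)%R ((Q * t * Q)%N%:Z * shift g L b0)%R].
Proof.
exists count_same, shift_sum; split; [exact: count_same_gt0 | exact: count_same_le | |].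
  by rewrite QP0; exact: shift_sum_P.
apply: eqmz_trans (eqmz_sym sum_shift_G_h) _; apply: eqmz_trans sum_shift_G_g _.
by rewrite card_same_shift; apply: eqmz_eq; rewrite mulrA -PoszM.
Qed.

End RootCounting.

Lemma root_shift_dvd (p : scale) r (g h : odometer p -> odometer p) M0 L0 j b0 :
  prime r -> v_infty p r -> level g M0 -> fixes_classes g M0 -> aut_inf h ->
  iter (r ^ (p M0 + j)) h = g -> b0 < p M0 -> r ^ j %| p L0 ->
  r ^ j %| `|shift g L0 b0|%N.
Proof.
move=> r_prime r_inf gM0 g_fix hA hg lt_b0 rj_dvd.
have [M [h' [le_M0M hh' hM h'M]]] := aut_inf_level_inv M0 hA.
set Q := p M %/ p M0.
have QP0 : Q * p M0 = p M by rewrite divnK // scale_dvd.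
have Q_gt0 : 0 < Q by move: (sc_pos p M); rewrite -QP0 muln_gt0 => /andP [].
have [L1 L1_log] := r_inf (2 * logn r Q + p M0 + j).
set L := maxn M (maxn L0 L1).
have [le_ML le_L0L le_L1L] : [/\ M <= L, L0 <= L & L1 <= L] by split; rewrite /L; lia.
have hN : iter (Q * r ^ (p M0 + j)) h = iter Q g.
  by apply: functional_extensionality => x; rewrite iterM hg.
have [t [S [t_gt0 le_tP0 S0 NS]]] :=
  root_shift_congr le_M0M le_ML gM0 g_fix hM h'M hh' QP0 hN lt_b0.
have rj_shift : r ^ j %| `|shift g L b0|%N.
  apply: (dvd_of_root_congr r_prime Q_gt0 t_gt0 le_tP0 _ S0 NS).
  by rewrite pfactor_dvdn ?sc_pos // L1_log.
apply/eqmz0_dvd; apply: eqmz_trans (eqmz_dvd rj_dvd (eqmz_sym (shift_eqmz g b0 le_L0L))) _.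
exact/eqmz0_dvd.
Qed.

Lemma nontrivial_shift (p : scale) (g : odometer p -> odometer p) M0 :
  level g M0 -> g <> id -> exists L0 b0, b0 < p M0 /\ ~ (p L0 %| `|shift g L0 b0|%N).
Proof.
move=> gM0 g_id.
have /not_all_ex_not [y gy] : ~ (forall y, g y = y).
  by move=> g_fix; apply: g_id; apply: functional_extensionality.
have /not_all_ex_not [L0 gyL0] : ~ (forall n, resid (g y) n = resid y n) by move/odo_ext.
exists L0, (resid y M0); split; first exact: resid_lt.
move=> /eqmz0_dvd [k2 E2]; apply: gyL0; apply: (@eqmz_small (p L0)); try exact: resid_lt.
by have [k1 E1] := level_shift y L0 gM0; exists (k1 + k2)%R; lia.
Qed.

Lemma not_s'divisible_elt (p : scale) s :
  prime s -> finite_torsion p -> ~ v_infty p s -> ~ has_s'divisible_elt p s.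
Proof.
move=> s_prime p_ft s_fin [g [gA g_ord g_root]].
have [M0 [g' [_ gg' gM0 g'M0]]] := aut_inf_level_inv 0 gA.
have [e e_gt0 ge_fix] := class_fixing_power gM0 g'M0 gg'.
have [E E_gt0 E_tors] := finite_torsion_exponent p_ft.
have geM0 := level_iter e gM0.
have g2E : iter (E * e) g = iter E (iter e g).
  by apply: functional_extensionality => x; rewrite iterM.
have g2M0 : level (iter (E * e) g) M0 by rewrite g2E; apply: level_iter.
have g2_fix : fixes_classes (iter (E * e) g) M0 by rewrite g2E; apply: fixes_classes_iter.
have Ee_gt0 : 0 < E * e by rewrite muln_gt0 E_gt0.
have [L0 [b0 [lt_b0 ndvd]]] := nontrivial_shift g2M0 (g_ord _ Ee_gt0).
have shift_g2 := shift_iter_fixes_classes E L0 geM0 ge_fix lt_b0; rewrite -g2E in shift_g2.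
have [r [r_prime r_inf r_ndvd]] := v_infty_prime_witness (E_tors ^~ L0) ndvd shift_g2.
have co_rs : coprime (r ^ (p M0 + logn r (p L0))) s.
  rewrite coprime_pexpl ?addn_gt0 ?sc_pos // prime_coprime // dvdn_prime2 //.
  by apply/eqP => rs; apply: s_fin; rewrite -rs.
have rk_gt0 : 0 < r ^ (p M0 + logn r (p L0)) by rewrite expn_gt0 prime_gt0.
have [h hA hg] := g_root _ rk_gt0 co_rs.
apply: r_ndvd; apply: (root_shift_dvd r_prime r_inf g2M0 g2_fix (aut_inf_iter (E * e) hA)) => //.
  by apply: functional_extensionality => x; rewrite -iterM mulnC iterM hg.
exact: pfactor_dvdnn.
Qed.

Theorem theorem5p5 (p q : scale) (s : nat) :
  finite_torsion p -> finite_torsion q -> prime s ->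
  v_infty q s -> aut_inf_iso p q -> v_infty p s.
Proof.
move=> p_ft _ s_prime q_s_inf pq_iso; apply: NNPP => p_s_fin.
apply: (not_s'divisible_elt s_prime p_ft p_s_fin).
exact: has_s'divisible_elt_iso pq_iso (s'divisible_elt_of_v_infty s_prime q_s_inf).
Qed.
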